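(* Let $A\in\mathbb{R}^{m\times n}$ have no zero row, with rows $a_1^T,\dots,a_m^T$, let ${\bf u}=(\mu_1,\dots,\mu_m)\in\mathbb{R}^m$, $P_k(\mu_k)=I-\mu_k a_ka_k^T/\|a_k\|_2^2$, $Q_i({\bf u}_i)=P_m(\mu_m)\cdots P_{i+1}(\mu_{i+1})$ for $1\le i\le m-1$, $Q_m({\bf u}_m)=I$, and $A_{\mathcal S}({\bf u})=(Q_1({\bf u}_1)a_1,\dots,Q_m({\bf u}_m)a_m)^T$. Let $h_{k,l}=a_k^Ta_l/\|a_l\|_2^2$ and, for $1\le i<j\le m$, $$d_{i,j}({\bf u}_i)=\sum_{v=2}^{j-i+1}(-1)^{v-1}\sum_{i=t_1<t_2<\dots<t_v=j}\ \prod_{s=1}^{v-1}\mu_{t_{s+1}}\prod_{s=1}^{v-1}h_{t_s,t_{s+1}},$$ the inner sum being over strictly increasing integer sequences from $i$ to $j$ of length $v$. Define $\Omega({\bf u})=(\omega_{i,j})\in\mathbb{R}^{m\times m}$ by $\omega_{i,j}=d_{i,j}({\bf u}_i)$ if $j>i$, $\omega_{i,i}=1$, and $\omega_{i,j}=0$ if $j<i$. Then $$A_{\mathcal S}({\bf u})=\Omega({\bf u})A.$$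
   Context: ${\bf u}_i=(\mu_{i+1},\dots,\mu_m)$. *)

(* Indices are 0-based: row k of A (k : 'I_m) is a_{k+1}. *)
From HB Require Import structures.
From mathcomp Require Import all_boot all_order all_algebra.
Set Implicit Arguments. Unset Strict Implicit. Unset Printing Implicit Defensive.
Import Order.TTheory GRing.Theory Num.Theory.
Local Open Scope ring_scope.

Section Kaczmarz.
Variables (R : realFieldType) (m n : nat).

Definition arow (A : 'M[R]_(m, n)) (k : 'I_m) : 'rV[R]_n := row k A.

Definition sqnorm (A : 'M[R]_(m, n)) (k : 'I_m) : R :=
  (arow A k *m (arow A k)^T) 0 0.

Definition Pk (A : 'M[R]_(m, n)) (u : 'rV[R]_m) (k : 'I_m) : 'M[R]_n :=
  1%:M - (u 0 k / sqnorm A k) *: ((arow A k)^T *m arow A k).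

(* Q_i(u_i) = P_m ... P_{i+1}  (identity for the last index).
   In 0-based indices: product of Pk k for k = i+1, ..., m-1, with larger k on the left. *)
Definition Qi (A : 'M[R]_(m, n)) (u : 'rV[R]_m) (i : 'I_m) : 'M[R]_n :=
  foldr (fun k M => M *m Pk A u k) 1%:M [seq k <- enum 'I_m | (nat_of_ord i < nat_of_ord k)%N].

Definition AS (A : 'M[R]_(m, n)) (u : 'rV[R]_m) : 'M[R]_(m, n) :=
  \matrix_(i < m, j < n) (Qi A u i *m (arow A i)^T) j 0.

Definition hkl (A : 'M[R]_(m, n)) (k l : 'I_m) : R :=
  (arow A k *m (arow A l)^T) 0 0 / sqnorm A l.

Definition incr_chain (v : nat) (i j : 'I_m) (t : v.-tuple 'I_m) : bool :=
  [&& nth i t 0 == i, nth i t v.-1 == j & sorted (fun a b : 'I_m => (a < b)%N) t].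

Definition dij (A : 'M[R]_(m, n)) (u : 'rV[R]_m) (i j : 'I_m) : R :=
  \sum_(2 <= v < (j - i).+2)
    (-1) ^+ v.-1 *
    \sum_(t : v.-tuple 'I_m | incr_chain i j t)
      ((\prod_(s < v.-1) u 0 (nth i t s.+1)) *
       (\prod_(s < v.-1) hkl A (nth i t s) (nth i t s.+1))).

Definition Omega (A : 'M[R]_(m, n)) (u : 'rV[R]_m) : 'M[R]_m :=
  \matrix_(i < m, j < m)
    (if (i < j)%N then dij A u i j else if i == j then 1 else 0).

End Kaczmarz.

(* Write r_i for the i-th row of A_S(u) and c_{i,k} = mu_k h_{i,k}. Since
   a_i^T (I - P_k) = c_{i,k} a_k^T and Q_i = Q_{i+1} P_{i+1}, telescoping gives
   r_i = a_i^T - sum_{k>i} c_{i,k} r_k. On the other side, the chain sums S_v(i,j)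
   over increasing chains i = t_1 < ... < t_v = j satisfy S_1(i,j) = [i = j] and
   S_{v+1}(i,j) = sum_{k>i} c_{i,k} S_v(k,j); as omega_{i,j} = sum_v (-1)^(v-1) S_v(i,j),
   this yields omega_{i,j} = [i = j] - sum_{k>i} c_{i,k} omega_{k,j}, so the rows of
   Omega(u) A obey the same upper triangular recursion, whose solution is unique. *)
From HB Require Import structures.
From mathcomp Require Import all_boot all_order all_algebra.
From mathcomp Require Import zify.
Set Implicit Arguments. Unset Strict Implicit. Unset Printing Implicit Defensive.
Import Order.TTheory GRing.Theory Num.Theory.
Local Open Scope ring_scope.

Lemma sum_tupleS (V : nmodType) (T : finType) (w : nat) (G : w.+1.-tuple T -> V) :
  \sum_(t : w.+1.-tuple T) G t = \sum_(x : T) \sum_(t : w.-tuple T) G [tuple of x :: t].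
Proof.
rewrite pair_big /= (reindex (fun p : T * w.-tuple T => [tuple of p.1 :: p.2])) //=.
exists (fun t : w.+1.-tuple T => (thead t, [tuple of behead t])).
  by move=> [x t] _ /=; congr pair; apply: val_inj.
by move=> t _; rewrite [in RHS](tuple_eta t).
Qed.

Lemma sum_tuple0 (V : nmodType) (T : finType) (G : 0.-tuple T -> V) :
  \sum_(t : 0.-tuple T) G t = G [tuple].
Proof. by rewrite (big_pred1 [tuple]) // => t; rewrite [t]tuple0 /= eqxx. Qed.

Lemma ord_downward_ind (m : nat) (P : 'I_m -> Prop) :
  (forall i : 'I_m, (forall k : 'I_m, (i < k)%N -> P k) -> P i) -> forall i, P i.
Proof.
move=> IH i; have [d] := ubnP (m - i); elim: d i => // d IHd i lt_d.
by apply: IH => k lt_ik; apply: IHd; have := ltn_ord k; lia.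
Qed.

Lemma triangular_solution_unique (R : pzRingType) (V : lmodType R) (m : nat)
    (b : 'I_m -> V) (c : 'I_m -> 'I_m -> R) (f g : 'I_m -> V) :
  (forall i, f i = b i - \sum_(k : 'I_m | (i < k)%N) c i k *: f k) ->
  (forall i, g i = b i - \sum_(k : 'I_m | (i < k)%N) c i k *: g k) ->
  f =1 g.
Proof.
move=> def_f def_g; apply: ord_downward_ind => i IH.
by rewrite def_f def_g; congr (_ - _); apply: eq_bigr => k /IH ->.
Qed.

Lemma sorted_ord_ltn_last (m : nat) (x : 'I_m) (s : seq 'I_m) :
  sorted (fun a b : 'I_m => (a < b)%N) (x :: s) -> (x + size s <= last x s)%N.
Proof.
elim: s x => [|y s IH] x /=; first by rewrite addn0.
move=> /andP [lt_xy sorted_s]; rewrite addnS.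
by apply: leq_trans (IH y sorted_s); rewrite ltn_add2r.
Qed.

Lemma incr_chain_gap (m v : nat) (i j : 'I_m) (t : v.+1.-tuple 'I_m) :
  incr_chain i j t -> (i + v <= j)%N.
Proof.
case: t => [[|x s] //= size_t]; rewrite /incr_chain /= => /and3P [/eqP <-].
have -> : v = size s by move/eqP: size_t => [].
rewrite -[size s]/((size (x :: s)).-1) nth_last /= => /eqP <-.
exact: sorted_ord_ltn_last.
Qed.

Section ChainSums.
Variables (R : realFieldType) (m n : nat) (A : 'M[R]_(m, n)) (u : 'rV[R]_m).

Definition sweep_coef (i k : 'I_m) : R := u 0 k * hkl A i k.

Definition chain_weight (v : nat) (d : 'I_m) (t : seq 'I_m) : R :=
  (\prod_(s < v.-1) u 0 (nth d t s.+1)) *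
  (\prod_(s < v.-1) hkl A (nth d t s) (nth d t s.+1)).

Definition chain_sum (v : nat) (i j : 'I_m) : R :=
  \sum_(t : v.-tuple 'I_m | incr_chain i j t) chain_weight v i t.

Lemma chain_sum_eq0 (w : nat) (i j : 'I_m) : (j < i + w)%N -> chain_sum w.+1 i j = 0.
Proof.
by move=> lt_j; apply: big1 => t /incr_chain_gap; rewrite leqNgt lt_j.
Qed.

Lemma chain_sum1 (i j : 'I_m) : chain_sum 1 i j = (i == j)%:R.
Proof.
rewrite /chain_sum big_mkcond sum_tupleS /=.
under eq_bigr => x _ do rewrite sum_tuple0 /incr_chain /= /chain_weight !big_ord0 mulr1.
rewrite (bigD1 i) //= big1 ?addr0; last by move=> x /negbTE ->.
by rewrite eqxx; case: (i == j).
Qed.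

Lemma chain_sumS (w : nat) (i j : 'I_m) :
  chain_sum w.+2 i j = \sum_(k : 'I_m | (i < k)%N) sweep_coef i k * chain_sum w.+1 k j.
Proof.
have chain_head (v : nat) (x y : 'I_m) (G : v.-tuple 'I_m -> R) :
    x != y -> \sum_(t : v.-tuple 'I_m) (if incr_chain y j [tuple of x :: t] then G t else 0) = 0.
  by move=> /negbTE xy; apply: big1 => t _; rewrite /incr_chain /= xy.
rewrite /chain_sum big_mkcond sum_tupleS /= (bigD1 i) //=.
rewrite [X in _ + X]big1 ?addr0 => [|x]; last exact: chain_head.
rewrite sum_tupleS [RHS]big_mkcond /=; apply: eq_bigr => k _.
rewrite [in RHS]big_mkcond sum_tupleS /=.
case: ifP => lt_ik; last first.
  by apply: big1 => t _; rewrite /incr_chain /= lt_ik !andbF.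
rewrite (bigD1 k) //= [X in _ * (_ + X)]big1 ?addr0 => [|x]; last exact: chain_head.
rewrite mulr_sumr; apply: eq_bigr => t _.
have size_kt : size (k :: t) = w.+1 by rewrite /= size_tuple.
rewrite /incr_chain /= !eqxx lt_ik /= (set_nth_default k i) ?size_kt //.
case: ifP => _; last by rewrite mulr0.
have nth_t (s : 'I_w) : nth i t s = nth k t s.
  by apply: set_nth_default; rewrite size_tuple.
have nth_kt (s : 'I_w) : nth i (k :: t) s = nth k (k :: t) s.
  by apply: set_nth_default; rewrite size_kt leqW.
rewrite /chain_weight /= !big_ord_recl /= /sweep_coef mulrACA.
by congr (_ * (_ * _)); apply: eq_bigr => s _; rewrite ?nth_t ?nth_kt.
Qed.

(* A range independent of i and j: the terms with w > j - i vanish by chain_sum_eq0. *)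
Definition omega_series (i j : 'I_m) : R :=
  \sum_(0 <= w < m.+1) (-1) ^+ w * chain_sum w.+1 i j.

Lemma omega_series_rec (i j : 'I_m) :
  omega_series i j = (i == j)%:R - \sum_(k : 'I_m | (i < k)%N) sweep_coef i k * omega_series k j.
Proof.
rewrite /omega_series big_nat_recl // expr0 mul1r chain_sum1; congr (_ + _).
transitivity (\sum_(0 <= w < m) \sum_(k : 'I_m | (i < k)%N)
                 - (sweep_coef i k * ((-1) ^+ w * chain_sum w.+1 k j))).
  apply: eq_bigr => w _; rewrite chain_sumS mulr_sumr; apply: eq_bigr => k _.
  by rewrite exprS mulN1r mulNr mulrCA.
rewrite exchange_big /= -sumrN; apply: eq_bigr => k _.
rewrite sumrN -mulr_sumr big_nat_recr //= (@chain_sum_eq0 m k j) ?mulr0 ?addr0 //.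
by have := ltn_ord j; lia.
Qed.

Lemma Omega_series (i j : 'I_m) : Omega A u i j = omega_series i j.
Proof.
have vanish (a b : nat) : (j < i + a)%N ->
    \sum_(a <= w < b) (-1) ^+ w * chain_sum w.+1 i j = 0.
  move=> lt_j; rewrite big_nat_cond big1 // => w /andP [/andP [le_aw _] _].
  by rewrite chain_sum_eq0 ?mulr0 //; lia.
rewrite /Omega mxE /omega_series big_ltn // expr0 mul1r chain_sum1.
case: ltngtP => cmp_ij.
- rewrite (_ : (i == j) = false) ?add0r; last by apply/negbTE; rewrite -val_eqE /= ltn_eqF.
  rewrite /dij [LHS]big_add1 /= [RHS](@big_cat_nat _ _ _ (j - i).+1) //=; last first.
    by have := ltn_ord j; lia.
  by rewrite (vanish (j - i).+1) ?addr0 //; lia.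
- rewrite (_ : (i == j) = false) ?add0r; last by apply/negbTE; rewrite -val_eqE /= gtn_eqF.
  by rewrite vanish //; lia.
- by rewrite -val_eqE /= cmp_ij eqxx vanish ?addr0 //; lia.
Qed.

Lemma Omega_rec (i j : 'I_m) :
  Omega A u i j = (i == j)%:R - \sum_(k : 'I_m | (i < k)%N) sweep_coef i k * Omega A u k j.
Proof.
rewrite Omega_series omega_series_rec; congr (_ - _).
by apply: eq_bigr => k _; rewrite Omega_series.
Qed.

Lemma row_Omega_mul_rec (i : 'I_m) :
  row i (Omega A u *m A) =
  row i A - \sum_(k : 'I_m | (i < k)%N) sweep_coef i k *: row k (Omega A u *m A).
Proof.
rewrite !row_mul mulmx_sum_row.
under eq_bigr do rewrite mxE Omega_rec scalerBl.
rewrite sumrB; congr (_ - _).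
  rewrite (bigD1 i) //= eqxx scale1r big1 ?addr0 // => j.
  by rewrite eq_sym => /negbTE ->; rewrite scale0r.
under eq_bigr do rewrite scaler_suml.
rewrite exchange_big /=; apply: eq_bigr => k _.
rewrite row_mul mulmx_sum_row scaler_sumr; apply: eq_bigr => j _.
by rewrite scalerA [row _ _ _ _]mxE.
Qed.

End ChainSums.

Section Projections.
Variables (R : realFieldType) (m n : nat) (A : 'M[R]_(m, n)) (u : 'rV[R]_m).

Lemma val_filter_gt_ord (i : 'I_m) :
  map val [seq k <- enum 'I_m | (nat_of_ord i < nat_of_ord k)%N] = iota i.+1 (m - i.+1).
Proof.
rewrite -filter_map val_enum_ord.
have -> : iota 0 m = iota 0 (i.+1 + (m - i.+1)) by rewrite subnKC.
rewrite iotaD filter_cat add0n.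
rewrite (@eq_in_filter _ _ pred0) => [|x]; last by rewrite mem_iota /=; lia.
rewrite filter_pred0 (@eq_in_filter _ _ predT) ?filter_predT // => x.
by rewrite mem_iota /=; lia.
Qed.

Lemma QiS (i : 'I_m) (lt_im : (i.+1 < m)%N) :
  Qi A u i = Qi A u (Ordinal lt_im) *m Pk A u (Ordinal lt_im).
Proof.
rewrite /Qi; suff -> : [seq k <- enum 'I_m | (nat_of_ord i < nat_of_ord k)%N] =
    Ordinal lt_im :: [seq k <- enum 'I_m | (nat_of_ord (Ordinal lt_im) < nat_of_ord k)%N] by [].
by apply: (inj_map val_inj); rewrite map_cons !val_filter_gt_ord -(subnSK lt_im).
Qed.

Lemma Qi_last (i : 'I_m) : ~~ (i.+1 < m)%N -> Qi A u i = 1%:M.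
Proof.
move=> ge_im; rewrite /Qi.
suff -> : [seq k <- enum 'I_m | (nat_of_ord i < nat_of_ord k)%N] = [::] by [].
by apply: (inj_map val_inj); rewrite val_filter_gt_ord (_ : m - i.+1 = 0)%N //; lia.
Qed.

Lemma trmx_Pk (k : 'I_m) : (Pk A u k)^T = Pk A u k.
Proof. by rewrite /Pk linearB /= linearZ /= trmx1 trmx_mul trmxK. Qed.

Lemma mulmx_trQi (i : 'I_m) (x : 'rV[R]_n) :
  x *m (Qi A u i)^T = x - \sum_(k : 'I_m | (i < k)%N) x *m (1%:M - Pk A u k) *m (Qi A u k)^T.
Proof.
elim/ord_downward_ind: i x => i IH x.
have [lt_im | ge_im] := boolP (i.+1 < m)%N; last first.
  rewrite Qi_last // trmx1 mulmx1 big1 ?subr0 // => k lt_ik.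
  by have := ltn_ord k; lia.
set i' := Ordinal lt_im.
rewrite QiS trmx_mul trmx_Pk mulmxA.
have -> : x *m Pk A u i' = x - x *m (1%:M - Pk A u i') by rewrite mulmxBr mulmx1 subKr.
rewrite mulmxBl (IH i') ?ltnSn // [in RHS](bigD1 i') //=.
rewrite [X in _ = _ - (_ + X)](eq_bigl (fun k : 'I_m => (i.+1 < k)%N)) => [|k].
  by set S := \sum_(_ < m | _) _; rewrite (opprD _ S) addrA addrAC.
by rewrite -val_eqE /=; apply/idP/idP; lia.
Qed.

Lemma row_AS (i : 'I_m) : row i (AS A u) = arow A i *m (Qi A u i)^T.
Proof. by rewrite -[RHS]trmxK trmx_mul trmxK; apply/rowP => j; rewrite !mxE. Qed.

Lemma arow_mul_1subPk (i k : 'I_m) :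
  arow A i *m (1%:M - Pk A u k) = sweep_coef A u i k *: arow A k.
Proof.
rewrite /Pk subKr -scalemxAr mulmxA [arow A i *m _]mx11_scalar mul_scalar_mx scalerA.
by rewrite /sweep_coef /hkl mulrAC mulrA.
Qed.

Lemma row_AS_rec (i : 'I_m) :
  row i (AS A u) = row i A - \sum_(k : 'I_m | (i < k)%N) sweep_coef A u i k *: row k (AS A u).
Proof.
rewrite row_AS mulmx_trQi; congr (_ - _); apply: eq_bigr => k _.
by rewrite row_AS arow_mul_1subPk scalemxAl.
Qed.

End Projections.

Theorem theorem3p8 (R : realFieldType) (m n : nat) (A : 'M[R]_(m, n))
  (hA : forall k : 'I_m, row k A != 0) (u : 'rV[R]_m) :
  AS A u = Omega A u *m A.
Proof.
apply/row_matrixP.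
apply: (triangular_solution_unique (b := fun i => row i A) (c := sweep_coef A u)
          (f := fun i => row i (AS A u)) (g := fun i => row i (Omega A u *m A))).
- exact: row_AS_rec.
- exact: row_Omega_mul_rec.
Qed.
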